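(* Let $\Bbbk$ be a field and $\mathcal{C}$ an additive pivotal $\Bbbk$-category in which every indecomposable object is absolutely indecomposable and every element of the radical of the endomorphism ring of an indecomposable object is nilpotent. Let $V$ be an absolutely simple object of $\mathcal{C}$, and fix a decomposition $V\otimes V^*=\bigoplus_{k\in I}W_k$ into indecomposable objects, with inclusions $i_k:W_k\to V\otimes V^*$, projections $p_k:V\otimes V^*\to W_k$ ($p_ki_k=\mathrm{Id}_{W_k}$), and idempotents $e_k=i_kp_k$ (pairwise orthogonal, summing to $\mathrm{Id}_{V\otimes V^*}$). Then there is a unique $j\in I$ satisfying the following equivalent conditions: (1) $e_j\,\mathrm{coev}_V=\mathrm{coev}_V$; (2) $\operatorname{Hom}_{\mathcal{C}}(\mathbb{1},W_j)$ is non-zero and is spanned by $p_j\,\mathrm{coev}_V$. There is also a unique $j'\in I$ satisfying the following equivalent conditions: (1') $\widetilde{\mathrm{ev}}_V\,e_{j'}=\widetilde{\mathrm{ev}}_V$; (2') $\operatorname{Hom}_{\mathcal{C}}(W_{j'},\mathbb{1})$ is non-zero and is spanned by $\widetilde{\mathrm{ev}}_V\, i_{j'}$.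
   Context: A (strict) tensor category $\mathcal{C}$ with unit $\mathbb{1}$ has a left duality if each object $V$ has an object $V^*$ and morphisms $\mathrm{coev}_V:\mathbb{1}\to V\otimes V^*$, $\mathrm{ev}_V:V^*\otimes V\to\mathbb{1}$ satisfying the zig-zag identities; a right duality consists of morphisms $\widetilde{\mathrm{coev}}_V:\mathbb{1}\to V^*\otimes V$, $\widetilde{\mathrm{ev}}_V:V\otimes V^*\to\mathbb{1}$ satisfying the analogous zig-zag identities. A pivotal category is a tensor category with compatible left and right dualities (same dual objects, same dual morphisms $f^*$, same isomorphisms $W^*\otimes V^*\cong (V\otimes W)^*$). A tensor $\Bbbk$-category is a tensor category whose hom-sets are $\Bbbk$-modules, with composition and tensor product bilinear, and $\operatorname{End}(\mathbb{1})$ free of rank one (identified with $\Bbbk$). An object $V$ is absolutely simple if $\operatorname{End}_{\mathcal{C}}(V)$ is free of rank one over $\Bbbk$ (i.e. $\Bbbk\to\operatorname{End}(V)$, $k\mapsto k\,\mathrm{Id}_V$ is an isomorphism), and absolutely indecomposable if $\operatorname{End}_{\mathcal{C}}(V)/\operatorname{Rad}(\operatorname{End}_{\mathcal{C}}(V))\cong\Bbbk$. *)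

From HB Require Import structures.
From mathcomp Require Import all_boot all_algebra.
Set Implicit Arguments. Unset Strict Implicit. Unset Printing Implicit Defensive.
Import GRing.Theory.
Local Open Scope ring_scope.

Record catData (K : fieldType) := CatData {
  Obj :> Type;
  Mor : Obj -> Obj -> lmodType K;
  idm : forall X : Obj, Mor X X;
  cmp : forall X Y Z : Obj, Mor Y Z -> Mor X Y -> Mor X Z }.
Arguments Mor {K c} _ _.
Arguments idm {K c} _.
Arguments cmp {K c X Y Z} _ _.

Notation "f '∘' g" := (cmp f g) (at level 41, right associativity).

Record kcat_axioms (K : fieldType) (C : catData K) : Prop := {
  cmpA : forall (X Y Z W : C) (f : Mor Z W) (g : Mor Y Z) (h : Mor X Y),
    f ∘ (g ∘ h) = (f ∘ g) ∘ h;
  cmp1m : forall (X Y : C) (f : Mor X Y), idm Y ∘ f = f;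
  cmpm1 : forall (X Y : C) (f : Mor X Y), f ∘ idm X = f;
  cmp_linl : forall (X Y Z : C) (a : K) (f g : Mor Y Z) (h : Mor X Y),
    (a *: f + g) ∘ h = a *: (f ∘ h) + g ∘ h;
  cmp_linr : forall (X Y Z : C) (a : K) (f : Mor Y Z) (g h : Mor X Y),
    f ∘ (a *: g + h) = a *: (f ∘ g) + f ∘ h }.

Record additive_cat (K : fieldType) (C : catData K) : Prop := {
  zero_obj : exists Z : C, idm Z = 0;
  biprod : forall X Y : C, exists (S : C) (i1 : Mor X S) (p1 : Mor S X)
      (i2 : Mor Y S) (p2 : Mor S Y),
    [/\ p1 ∘ i1 = idm X, p2 ∘ i2 = idm Y & i1 ∘ p1 + i2 ∘ p2 = idm S] }.

(* Tensor (monoidal) structure.  We use a general (not necessarily strict)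
   monoidal structure with associator and unitors; strict tensor categories
   are the special case where these are identities. *)
Record tensData (K : fieldType) (C : catData K) := TensData {
  tens : C -> C -> C;
  tensm : forall X X' Y Y' : C, Mor X Y -> Mor X' Y' -> Mor (tens X X') (tens Y Y');
  tunit : C;
  asc : forall X Y Z : C, Mor (tens (tens X Y) Z) (tens X (tens Y Z));
  ascI : forall X Y Z : C, Mor (tens X (tens Y Z)) (tens (tens X Y) Z);
  lun : forall X : C, Mor (tens tunit X) X;
  lunI : forall X : C, Mor X (tens tunit X);
  run : forall X : C, Mor (tens X tunit) X;
  runI : forall X : C, Mor X (tens X tunit) }.
Arguments tensm {K C} t {X X' Y Y'} _ _.

Section Tensor.
Variables (K : fieldType) (C : catData K) (T : tensData C).
Local Notation "X ⊗ Y" := (tens T X Y) (at level 37, left associativity).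
Local Notation "f ⊠ g" := (tensm T f g) (at level 31, left associativity).
Local Notation I1 := (tunit T).

Record tens_axioms : Prop := {
  tensm_id : forall X Y : C, idm X ⊠ idm Y = idm (X ⊗ Y);
  tensm_cmp : forall (X X' Y Y' Z Z' : C) (f : Mor Y Z) (g : Mor X Y)
      (f' : Mor Y' Z') (g' : Mor X' Y'), (f ∘ g) ⊠ (f' ∘ g') = (f ⊠ f') ∘ (g ⊠ g');
  tensm_linl : forall (X X' Y Y' : C) (a : K) (f g : Mor X Y) (h : Mor X' Y'),
    (a *: f + g) ⊠ h = a *: (f ⊠ h) + g ⊠ h;
  tensm_linr : forall (X X' Y Y' : C) (a : K) (h : Mor X Y) (f g : Mor X' Y'),
    h ⊠ (a *: f + g) = a *: (h ⊠ f) + h ⊠ g;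
  ascK : forall X Y Z : C, ascI T X Y Z ∘ asc T X Y Z = idm _;
  ascIK : forall X Y Z : C, asc T X Y Z ∘ ascI T X Y Z = idm _;
  asc_nat : forall (X X' Y Y' Z Z' : C) (f : Mor X X') (g : Mor Y Y') (h : Mor Z Z'),
    (f ⊠ (g ⊠ h)) ∘ asc T X Y Z = asc T X' Y' Z' ∘ ((f ⊠ g) ⊠ h);
  lunK : forall X : C, lunI T X ∘ lun T X = idm _;
  lunIK : forall X : C, lun T X ∘ lunI T X = idm _;
  lun_nat : forall (X Y : C) (f : Mor X Y), f ∘ lun T X = lun T Y ∘ (idm I1 ⊠ f);
  runK : forall X : C, runI T X ∘ run T X = idm _;
  runIK : forall X : C, run T X ∘ runI T X = idm _;
  run_nat : forall (X Y : C) (f : Mor X Y), f ∘ run T X = run T Y ∘ (f ⊠ idm I1);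
  pentagon : forall W X Y Z : C,
    asc T W X (Y ⊗ Z) ∘ asc T (W ⊗ X) Y Z
    = (idm W ⊠ asc T X Y Z) ∘ asc T W (X ⊗ Y) Z ∘ (asc T W X Y ⊠ idm Z);
  triangle : forall X Y : C, (idm X ⊠ lun T Y) ∘ asc T X I1 Y = run T X ⊠ idm Y;
  end_unit : forall f : Mor I1 I1, exists! c : K, f = c *: idm I1 }.

(* Left and right dualities with the same dual objects. *)
Record dualData := DualData {
  dobj : C -> C;
  coev : forall V : C, Mor I1 (V ⊗ dobj V);
  ev   : forall V : C, Mor (dobj V ⊗ V) I1;
  coevt : forall V : C, Mor I1 (dobj V ⊗ V);
  evt   : forall V : C, Mor (V ⊗ dobj V) I1 }.

Variable D : dualData.
Local Notation "X ^*" := (dobj D X) (at level 1, left associativity, format "X ^*").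

Definition ldual_mor (V W : C) (f : Mor V W) : Mor (W^*) (V^*) :=
  lun T _ ∘ (ev D W ⊠ idm (V^*)) ∘ ((idm (W^*) ⊠ f) ⊠ idm (V^*))
    ∘ ascI T _ _ _ ∘ (idm (W^*) ⊠ coev D V) ∘ runI T _.

Definition rdual_mor (V W : C) (f : Mor V W) : Mor (W^*) (V^*) :=
  run T _ ∘ (idm (V^*) ⊠ evt D W) ∘ (idm (V^*) ⊠ (f ⊠ idm (W^*)))
    ∘ asc T _ _ _ ∘ (coevt D V ⊠ idm (W^*)) ∘ lunI T _.

Definition liso (V W : C) : Mor (W^* ⊗ V^*) ((V ⊗ W)^*) :=
  let E : Mor ((W^* ⊗ V^*) ⊗ (V ⊗ W)) I1 :=
    ev D W ∘ (idm (W^*) ⊠ (lun T W ∘ (ev D V ⊠ idm W) ∘ ascI T _ _ _))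
      ∘ asc T _ _ _ in
  lun T _ ∘ (E ⊠ idm _) ∘ ascI T _ _ _ ∘ (idm _ ⊠ coev D (V ⊗ W)) ∘ runI T _.

Definition riso (V W : C) : Mor (W^* ⊗ V^*) ((V ⊗ W)^*) :=
  let E : Mor ((V ⊗ W) ⊗ (W^* ⊗ V^*)) I1 :=
    evt D V ∘ ((run T V ∘ (idm V ⊠ evt D W) ∘ asc T _ _ _) ⊠ idm (V^*))
      ∘ ascI T _ _ _ in
  run T _ ∘ (idm _ ⊠ E) ∘ asc T _ _ _ ∘ (coevt D (V ⊗ W) ⊠ idm _) ∘ lunI T _.

Record pivotal_axioms : Prop := {
  zz_l1 : forall V : C,
    run T V ∘ (idm V ⊠ ev D V) ∘ asc T _ _ _ ∘ (coev D V ⊠ idm V) ∘ lunI T V = idm V;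
  zz_l2 : forall V : C,
    lun T (V^*) ∘ (ev D V ⊠ idm (V^*)) ∘ ascI T _ _ _ ∘ (idm (V^*) ⊠ coev D V)
      ∘ runI T (V^*) = idm (V^*);
  zz_r1 : forall V : C,
    lun T V ∘ (evt D V ⊠ idm V) ∘ ascI T _ _ _ ∘ (idm V ⊠ coevt D V) ∘ runI T V = idm V;
  zz_r2 : forall V : C,
    run T (V^*) ∘ (idm (V^*) ⊠ evt D V) ∘ asc T _ _ _ ∘ (coevt D V ⊠ idm (V^*))
      ∘ lunI T (V^*) = idm (V^*);
  piv_mor : forall (V W : C) (f : Mor V W), ldual_mor f = rdual_mor f;
  piv_iso : forall V W : C, liso V W = riso V W }.

End Tensor.

Section Objects.
Variables (K : fieldType) (C : catData K).

Definition indecomposable (X : C) : Prop :=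
  idm X <> 0 /\
  forall (Y Z : C) (i1 : Mor Y X) (p1 : Mor X Y) (i2 : Mor Z X) (p2 : Mor X Z),
    p1 ∘ i1 = idm Y -> p2 ∘ i2 = idm Z -> i1 ∘ p1 + i2 ∘ p2 = idm X ->
    idm Y = 0 \/ idm Z = 0.

(* f lies in the Jacobson radical Rad(End(X)):  1 - g f is left invertible
   for every g. *)
Definition in_rad (X : C) (f : Mor X X) : Prop :=
  forall g : Mor X X, exists h : Mor X X, h ∘ (idm X - g ∘ f) = idm X.

(* End(X)/Rad(End(X)) ≅ K, i.e. the canonical map K -> End(X)/Rad(End(X)),
   k |-> class of k Id_X, is bijective. *)
Definition abs_indecomposable (X : C) : Prop :=
  forall f : Mor X X, exists! c : K, in_rad (f - c *: idm X).

Definition abs_simple (X : C) : Prop :=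
  forall f : Mor X X, exists! c : K, f = c *: idm X.

Definition nilpotent_endo (X : C) (f : Mor X X) : Prop :=
  exists n : nat, iter n (cmp f) (idm X) = 0.

End Objects.

From HB Require Import structures.
From mathcomp Require Import all_boot all_algebra.
Set Implicit Arguments. Unset Strict Implicit. Unset Printing Implicit Defensive.
Import GRing.Theory.
Local Open Scope ring_scope.

(* Transposing along the zig-zag identities identifies Hom(1, V ⊗ V^* ) with
   End(V) = K Id_V, so Hom(1, V ⊗ V^* ) is the line spanned by coev_V, which is
   nonzero.  Each idempotent e_k then acts on coev_V by a scalar c with
   c^2 = c, i.e. fixes or kills it.  As the e_k are orthogonal and sum to the
   identity, exactly one e_j fixes coev_V, and Hom(1, W_j) = p_j Hom(1, V ⊗ V^* )
   is spanned by p_j coev_V.  The claim for evt_V is the same argument in the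
   opposite category, using Hom(V ⊗ V^*, 1) ≅ End(V). *)

Section LinearCategory.
Variables (K : fieldType) (C : catData K).
Hypothesis hC : kcat_axioms C.

Lemma cmpDl (X Y Z : C) (f g : Mor Y Z) (h : Mor X Y) : (f + g) ∘ h = f ∘ h + g ∘ h.
Proof. by have := cmp_linl hC 1 f g h; rewrite !scale1r. Qed.

Lemma cmpDr (X Y Z : C) (f : Mor Y Z) (g h : Mor X Y) : f ∘ (g + h) = f ∘ g + f ∘ h.
Proof. by have := cmp_linr hC 1 f g h; rewrite !scale1r. Qed.

Lemma cmp0l (X Y Z : C) (h : Mor X Y) : (0 : Mor Y Z) ∘ h = 0.
Proof. by apply: (addrI (0 ∘ h)); rewrite -cmpDl !addr0. Qed.

Lemma cmp0r (X Y Z : C) (f : Mor Y Z) : f ∘ (0 : Mor X Y) = 0.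
Proof. by apply: (addrI (f ∘ 0)); rewrite -cmpDr !addr0. Qed.

Lemma cmpZl (X Y Z : C) a (f : Mor Y Z) (h : Mor X Y) : (a *: f) ∘ h = a *: (f ∘ h).
Proof. by have := cmp_linl hC a f 0 h; rewrite !addr0 cmp0l addr0. Qed.

Lemma cmpZr (X Y Z : C) a (f : Mor Y Z) (h : Mor X Y) : f ∘ (a *: h) = a *: (f ∘ h).
Proof. by have := cmp_linr hC a f h 0; rewrite !addr0 cmp0r addr0. Qed.

Lemma cmp_suml (X Y Z : C) (I : finType) (f : I -> Mor Y Z) (h : Mor X Y) :
  (\sum_k f k) ∘ h = \sum_k (f k ∘ h).
Proof. exact: (big_morph (fun g => g ∘ h) (fun f g => cmpDl f g h) (cmp0l _ h)). Qed.

Lemma cmpA_eq (X Y Z W : C) (x : Mor Y Z) (y : Mor X Y) (e : Mor X Z) :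
  x ∘ y = e -> forall k : Mor Z W, (k ∘ x) ∘ y = k ∘ e.
Proof. by move=> xy k; rewrite -(cmpA hC) xy. Qed.

Lemma cmpI_linv (X Y Z : C) (u : Mor Y Z) (v : Mor Z Y) :
  v ∘ u = idm Y -> injective (fun f : Mor X Y => u ∘ f).
Proof. by move=> vu f g /= E; rewrite -[f](cmp1m hC) -[g](cmp1m hC) -vu -!(cmpA hC) E. Qed.

Lemma cmpI_rinv (X Y Z : C) (u : Mor X Y) (v : Mor Y X) :
  u ∘ v = idm Y -> injective (fun f : Mor Y Z => f ∘ u).
Proof. by move=> uv f g /= E; rewrite -[f](cmpm1 hC) -[g](cmpm1 hC) -uv !(cmpA hC) E. Qed.

Definition op_cat : catData K :=
  @CatData K C (fun X Y => Mor Y X) (fun X => idm X) (fun X Y Z f g => g ∘ f).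

Lemma op_kcat_axioms : kcat_axioms op_cat.
Proof.
split=> /= *; [by rewrite (cmpA hC) | exact: cmpm1 | exact: cmp1m |
  exact: cmp_linr | exact: cmp_linl].
Qed.

End LinearCategory.

Section IdempotentDecomposition.
Variables (K : fieldType) (C : catData K).
Hypothesis hC : kcat_axioms C.
Variables (U S : C) (u : Mor U S).
Hypotheses (u_neq0 : u != 0) (u_span : forall f : Mor U S, exists c : K, f = c *: u).
Variables (I : finType) (W : I -> C) (i : forall k, Mor (W k) S) (p : forall k, Mor S (W k)).
Hypotheses (hpi : forall k, p k ∘ i k = idm (W k))
  (horth : forall k l, k != l -> (i k ∘ p k) ∘ (i l ∘ p l) = 0)
  (hsum : \sum_k (i k ∘ p k) = idm S).

Lemma idempotent_summand k : (i k ∘ p k) ∘ (i k ∘ p k) = i k ∘ p k.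
Proof. by rewrite -(cmpA hC) (cmpA hC (p k)) hpi (cmp1m hC). Qed.

Lemma summand_fix_or_kill k : (i k ∘ p k) ∘ u = u \/ (i k ∘ p k) ∘ u = 0.
Proof.
have [c Ec] := u_span ((i k ∘ p k) ∘ u).
have : (c * c - c) *: u = 0.
  by rewrite scalerBl -scalerA -Ec -(cmpZr hC) -Ec (cmpA hC) idempotent_summand subrr.
move/eqP; rewrite scaler_eq0 (negbTE u_neq0) orbF -[X in _ - X]mulr1 -mulrBr mulf_eq0 subr_eq0.
by case/orP=> /eqP c_eq; [right | left]; rewrite Ec c_eq ?scale0r ?scale1r.
Qed.

Lemma exists_unique_summand_fix : exists! j, (i j ∘ p j) ∘ u = u.
Proof.
have [/existsP [j /eqP Ej] | no_fix] := boolP [exists j, (i j ∘ p j) ∘ u == u].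
  exists j; split=> // l El; apply/eqP/negP => /negP jl; move/eqP: u_neq0; apply.
  by rewrite -Ej -El (cmpA hC) horth // (cmp0l hC).
suff : u = 0 by move/eqP: u_neq0.
rewrite -[u](cmp1m hC) -hsum (cmp_suml hC) big1 // => k _.
have [Ek|//] := summand_fix_or_kill k.
by move/existsPn: no_fix => /(_ k); rewrite Ek eqxx.
Qed.

Lemma summand_fix_iff_span j :
  (i j ∘ p j) ∘ u = u <->
  (exists f : Mor U (W j), f <> 0) /\ forall f : Mor U (W j), exists c, f = c *: (p j ∘ u).
Proof.
split=> [Ej | [[f0 f0_neq0] span_j]].
  split.
    exists (p j ∘ u) => pu0; move/eqP: u_neq0; apply.
    by rewrite -Ej -(cmpA hC) pu0 (cmp0r hC).
  move=> f; have [c Ec] := u_span (i j ∘ f); exists c.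
  by rewrite -[f](cmp1m hC) -hpi -(cmpA hC) Ec (cmpZr hC).
have [//|Ej0] := summand_fix_or_kill j.
have pu0 : p j ∘ u = 0 by rewrite -[p j](cmp1m hC) -hpi -!(cmpA hC) (cmpA hC (i j)) Ej0 (cmp0r hC).
by have [c Ec] := span_j f0; case: f0_neq0; rewrite Ec pu0 scaler0.
Qed.

End IdempotentDecomposition.

Section MonoidalCoherence.
Variables (K : fieldType) (C : catData K) (T : tensData C).
Hypotheses (hC : kcat_axioms C) (hT : tens_axioms T).
Local Notation "X ⊗ Y" := (tens T X Y) (at level 37, left associativity).
Local Notation "f ⊠ g" := (tensm T f g) (at level 31, left associativity).
Local Notation I1 := (tunit T).
Local Notation cmpA := (cmpA hC).
Local Notation cmp1m := (cmp1m hC).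
Local Notation cmpm1 := (cmpm1 hC).
Local Notation tensm_id := (tensm_id hT).
Local Notation tensm_cmp := (tensm_cmp hT).

Lemma tens0l (X X' Y Y' : C) (h : Mor X' Y') : (0 : Mor X Y) ⊠ h = 0.
Proof.
apply: (addrI ((0 : Mor X Y) ⊠ h)).
by have := tensm_linl hT 1 (0 : Mor X Y) 0 h; rewrite !scale1r !addr0.
Qed.

Lemma tensZl (X X' Y Y' : C) a (f : Mor X Y) (h : Mor X' Y') :
  (a *: f) ⊠ h = a *: (f ⊠ h).
Proof. by have := tensm_linl hT a f 0 h; rewrite !addr0 tens0l addr0. Qed.

Lemma tensm_cmpl (X Y Z W : C) (f : Mor Y Z) (g : Mor X Y) :
  (f ∘ g) ⊠ idm W = (f ⊠ idm W) ∘ (g ⊠ idm W).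
Proof. by rewrite -tensm_cmp cmp1m. Qed.

Lemma tensm_cmpr (X Y Z W : C) (f : Mor Y Z) (g : Mor X Y) :
  idm W ⊠ (f ∘ g) = (idm W ⊠ f) ∘ (idm W ⊠ g).
Proof. by rewrite -tensm_cmp cmp1m. Qed.

Lemma tensm_cmp_lr (X X' Y Y' : C) (f : Mor X Y) (g : Mor X' Y') :
  (f ⊠ idm Y') ∘ (idm X ⊠ g) = f ⊠ g.
Proof. by rewrite -tensm_cmp cmp1m cmpm1. Qed.

Lemma tensm_cmp_rl (X X' Y Y' : C) (f : Mor X Y) (g : Mor X' Y') :
  (idm Y ⊠ g) ∘ (f ⊠ idm X') = f ⊠ g.
Proof. by rewrite -tensm_cmp cmp1m cmpm1. Qed.

Lemma ascI_nat (X X' Y Y' Z Z' : C) (f : Mor X X') (g : Mor Y Y') (h : Mor Z Z') :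
  ascI T X' Y' Z' ∘ (f ⊠ (g ⊠ h)) = ((f ⊠ g) ⊠ h) ∘ ascI T X Y Z.
Proof.
apply: (cmpI_linv hC (ascK hT _ _ _)); rewrite /= !cmpA (ascIK hT) cmp1m.
by rewrite -(asc_nat hT) -cmpA (ascIK hT) cmpm1.
Qed.

Lemma lunI_nat (X Y : C) (f : Mor X Y) : lunI T Y ∘ f = (idm I1 ⊠ f) ∘ lunI T X.
Proof.
apply: (cmpI_linv hC (lunK hT _)); rewrite /= !cmpA (lunIK hT) cmp1m.
by rewrite -(lun_nat hT) -cmpA (lunIK hT) cmpm1.
Qed.

Lemma runI_nat (X Y : C) (f : Mor X Y) : runI T Y ∘ f = (f ⊠ idm I1) ∘ runI T X.
Proof.
apply: (cmpI_linv hC (runK hT _)); rewrite /= !cmpA (runIK hT) cmp1m.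
by rewrite -(run_nat hT) -cmpA (runIK hT) cmpm1.
Qed.

Lemma tensm_idl_inj (X Y : C) (f g : Mor X Y) : idm I1 ⊠ f = idm I1 ⊠ g -> f = g.
Proof.
by move=> E; apply: (cmpI_rinv hC (lunIK hT X)); rewrite /= (lun_nat hT) E -(lun_nat hT).
Qed.

Lemma tensm_idr_inj (X Y : C) (f g : Mor X Y) : f ⊠ idm I1 = g ⊠ idm I1 -> f = g.
Proof.
by move=> E; apply: (cmpI_rinv hC (runIK hT X)); rewrite /= (run_nat hT) E -(run_nat hT).
Qed.

(* Kelly's coherence consequences of the pentagon and triangle axioms. *)
Lemma lun_tens (X Y : C) : lun T (X ⊗ Y) ∘ asc T I1 X Y = lun T X ⊠ idm Y.
Proof.
apply: tensm_idl_inj; apply: (cmpI_rinv hC (ascIK hT I1 (I1 ⊗ X) Y)) => /=.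
rewrite [RHS](asc_nat hT).
have ascl_inv : (asc T I1 I1 X ⊠ idm Y) ∘ (ascI T I1 I1 X ⊠ idm Y) = idm _.
  by rewrite -tensm_cmpl (ascIK hT) tensm_id.
apply: (cmpI_rinv hC ascl_inv) => /=.
rewrite tensm_cmpr -!cmpA -(pentagon hT) cmpA (triangle hT) -(tensm_id X Y) (asc_nat hT).
by rewrite -(triangle hT) tensm_cmpl.
Qed.

Lemma run_tens (X Y : C) : (idm X ⊠ run T Y) ∘ asc T X Y I1 = run T (X ⊗ Y).
Proof.
apply: tensm_idr_inj; apply: (cmpI_linv hC (ascK hT X Y I1)) => /=.
rewrite tensm_cmpl cmpA -(asc_nat hT) -(triangle hT Y I1) tensm_cmpr -!cmpA -(pentagon hT).
by rewrite cmpA (asc_nat hT) tensm_id -cmpA (triangle hT).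
Qed.

Lemma lun_unit : lun T I1 = run T I1.
Proof.
apply: tensm_idr_inj.
have lun_tens_unit : lun T (I1 ⊗ I1) = idm I1 ⊠ lun T I1.
  by rewrite -[LHS]cmp1m -(lunK hT I1) -cmpA (lun_nat hT) cmpA (lunK hT) cmp1m.
by rewrite -(lun_tens I1 I1) -(triangle hT) lun_tens_unit.
Qed.

Lemma lunI_tens (X Y : C) : lunI T X ⊠ idm Y = ascI T I1 X Y ∘ lunI T (X ⊗ Y).
Proof.
have lunl_inv : (lunI T X ⊠ idm Y) ∘ (lun T X ⊠ idm Y) = idm _.
  by rewrite -tensm_cmpl (lunK hT) tensm_id.
apply: (cmpI_linv hC lunl_inv) => /=.
rewrite -tensm_cmpl (lunIK hT) tensm_id -(lun_tens X Y) cmpA.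
by rewrite -[(_ ∘ asc _ _ _ _) ∘ _]cmpA (ascIK hT) cmpm1 (lunIK hT).
Qed.

Lemma runI_tens (X Y : C) : idm X ⊠ runI T Y = asc T X Y I1 ∘ runI T (X ⊗ Y).
Proof.
have runr_inv : (idm X ⊠ runI T Y) ∘ (idm X ⊠ run T Y) = idm _.
  by rewrite -tensm_cmpr (runK hT) tensm_id.
apply: (cmpI_linv hC runr_inv) => /=.
by rewrite -tensm_cmpr (runIK hT) tensm_id cmpA run_tens (runIK hT).
Qed.

Lemma lunI_unit : lunI T I1 = runI T I1.
Proof. by rewrite -[LHS]cmpm1 -(runIK hT) -lun_unit cmpA (lunK hT) cmp1m. Qed.

Lemma tensm_id_run (X Y : C) : idm X ⊠ run T Y = run T (X ⊗ Y) ∘ ascI T X Y I1.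
Proof. by rewrite -run_tens -cmpA (ascIK hT) cmpm1. Qed.

Lemma pentagon_ascI_r (W X Y Z : C) :
  (idm W ⊠ ascI T X Y Z) ∘ asc T W X (Y ⊗ Z)
  = asc T W (X ⊗ Y) Z ∘ (asc T W X Y ⊠ idm Z) ∘ ascI T (W ⊗ X) Y Z.
Proof.
apply: (cmpI_rinv hC (ascIK hT (W ⊗ X) Y Z)) => /=.
rewrite -cmpA (pentagon hT) cmpA -tensm_cmpr (ascK hT) tensm_id cmp1m.
by rewrite -!cmpA (ascK hT) cmpm1.
Qed.

Lemma pentagon_ascI_l (W X Y Z : C) :
  asc T (W ⊗ X) Y Z ∘ (ascI T W X Y ⊠ idm Z)
  = ascI T W X (Y ⊗ Z) ∘ (idm W ⊠ asc T X Y Z) ∘ asc T W (X ⊗ Y) Z.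
Proof.
apply: (cmpI_linv hC (ascK hT W X (Y ⊗ Z))) => /=.
rewrite [RHS]cmpA (ascIK hT) cmp1m cmpA (pentagon hT) -!cmpA.
by rewrite -tensm_cmpl (ascIK hT) tensm_id cmpm1.
Qed.

Lemma triangleI (X Y : C) : asc T X I1 Y ∘ (runI T X ⊠ idm Y) = idm X ⊠ lunI T Y.
Proof.
have lunr_inv : (idm X ⊠ lunI T Y) ∘ (idm X ⊠ lun T Y) = idm _.
  by rewrite -tensm_cmpr (lunK hT) tensm_id.
apply: (cmpI_linv hC lunr_inv) => /=.
by rewrite cmpA (triangle hT) -tensm_cmpl (runIK hT) tensm_id -tensm_cmpr (lunIK hT) tensm_id.
Qed.

End MonoidalCoherence.

Section PivotalDuality.
Variables (K : fieldType) (C : catData K) (T : tensData C) (D : dualData T).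
Hypotheses (hC : kcat_axioms C) (hT : tens_axioms T) (hD : pivotal_axioms D).
Local Notation "X ⊗ Y" := (tens T X Y) (at level 37, left associativity).
Local Notation "f ⊠ g" := (tensm T f g) (at level 31, left associativity).
Local Notation I1 := (tunit T).
Local Notation "X ^*" := (dobj D X) (at level 1, left associativity, format "X ^*").
Local Notation cmpA := (cmpA hC).
Local Notation cmpA_eq := (cmpA_eq hC).
Local Notation tensm_id := (tensm_id hT).
Variable V : C.

Definition coev_mate (g : Mor I1 (V ⊗ V^*)) : Mor V V :=
  run T V ∘ (idm V ⊠ ev D V) ∘ asc T V (V^*) V ∘ (g ⊠ idm V) ∘ lunI T V.

Definition evt_mate (h : Mor (V ⊗ V^*) I1) : Mor V V :=
  lun T V ∘ (h ⊠ idm V) ∘ ascI T V (V^*) V ∘ (idm V ⊠ coevt D V) ∘ runI T V.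

Lemma coev_mate_slide (g : Mor I1 (V ⊗ V^*)) :
  (coev_mate g ⊠ idm (V^*)) ∘ coev D V
  = (idm V ⊠ (lun T (V^*) ∘ (ev D V ⊠ idm (V^*)) ∘ ascI T _ _ _
               ∘ (idm (V^*) ⊠ coev D V) ∘ runI T (V^*))) ∘ g.
Proof.
rewrite /coev_mate !(tensm_cmpl hC hT) !(tensm_cmpr hC hT) ?cmpA.
rewrite (lunI_tens hC hT V (V^*)) ?cmpA (cmpA_eq (lunI_nat hC hT (coev D V))) ?cmpA.
rewrite (cmpA_eq (esym (ascI_nat hC hT g _ _))) ?cmpA tensm_id.
rewrite (cmpA_eq (tensm_cmp_lr hC hT g (coev D V))).
rewrite (runI_tens hC hT V (V^*)) ?cmpA (cmpA_eq (asc_nat hT (idm V) (idm (V^*)) (coev D V))).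
rewrite ?cmpA tensm_id (cmpA_eq (runI_nat hC hT g)) ?cmpA.
rewrite (cmpA_eq (tensm_cmp_rl hC hT g (coev D V))) (lunI_unit hC hT).
congr ((_ ∘ _) ∘ _).
rewrite -[(_ ∘ (idm _ ⊠ ascI _ _ _ _)) ∘ _]cmpA (pentagon_ascI_r hC hT) ?cmpA.
by rewrite (cmpA_eq (asc_nat hT (idm V) (ev D V) (idm (V^*)))) ?cmpA (triangle hT).
Qed.

Lemma evt_mate_slide (h : Mor (V ⊗ V^*) I1) :
  evt D V ∘ (evt_mate h ⊠ idm (V^*))
  = h ∘ (idm V ⊠ (run T (V^*) ∘ (idm (V^*) ⊠ evt D V) ∘ asc T _ _ _
                   ∘ (coevt D V ⊠ idm (V^*)) ∘ lunI T (V^*))).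
Proof.
rewrite /evt_mate !(tensm_cmpl hC hT) !(tensm_cmpr hC hT) ?cmpA.
rewrite -(lun_tens hC hT V (V^*)) ?cmpA (lun_nat hT (evt D V)) ?cmpA.
rewrite (cmpA_eq (esym (asc_nat hT h (idm V) (idm (V^*))))) ?cmpA tensm_id.
rewrite (cmpA_eq (tensm_cmp_rl hC hT h (evt D V))).
rewrite (tensm_id_run hC hT V (V^*)) ?cmpA (run_nat hT h) ?cmpA.
rewrite (cmpA_eq (ascI_nat hC hT (idm V) (idm (V^*)) (evt D V))) ?cmpA tensm_id.
rewrite (cmpA_eq (tensm_cmp_lr hC hT h (evt D V))).
rewrite -(lun_unit hC hT) -?cmpA; congr (_ ∘ (_ ∘ _)).
rewrite cmpA (pentagon_ascI_l hC hT) -?cmpA; congr (_ ∘ (_ ∘ _)).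
by rewrite cmpA -(asc_nat hT (idm V) (coevt D V) (idm (V^*))) -cmpA (triangleI hC hT).
Qed.

Lemma coev_mateK (g : Mor I1 (V ⊗ V^*)) : (coev_mate g ⊠ idm (V^*)) ∘ coev D V = g.
Proof. by rewrite coev_mate_slide (zz_l2 hD V) tensm_id (cmp1m hC). Qed.

Lemma evt_mateK (h : Mor (V ⊗ V^*) I1) : evt D V ∘ (evt_mate h ⊠ idm (V^*)) = h.
Proof. by rewrite evt_mate_slide (zz_r2 hD V) tensm_id (cmpm1 hC). Qed.

Hypothesis hV : abs_simple V.

Lemma abs_simple_idm_neq0 : idm V != 0.
Proof.
apply/eqP => idV0; have [c [_ c_uniq]] := hV (idm V).
have c0 : c = 0 by apply: c_uniq; rewrite scale0r idV0.
have c1 : c = 1 by apply: c_uniq; rewrite scale1r.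
by move: (oner_neq0 K); rewrite -c1 c0 eqxx.
Qed.

Lemma coev_span (g : Mor I1 (V ⊗ V^*)) : exists c : K, g = c *: coev D V.
Proof.
have [c [Ec _]] := hV (coev_mate g); exists c.
by rewrite -[LHS]coev_mateK Ec (tensZl hT) tensm_id (cmpZl hC) (cmp1m hC).
Qed.

Lemma evt_span (h : Mor (V ⊗ V^*) I1) : exists c : K, h = c *: evt D V.
Proof.
have [c [Ec _]] := hV (evt_mate h); exists c.
by rewrite -[LHS]evt_mateK Ec (tensZl hT) tensm_id (cmpZr hC) (cmpm1 hC).
Qed.

Lemma coev_neq0 : coev D V != 0.
Proof.
apply/eqP => coev0; move: (zz_l1 hD V) abs_simple_idm_neq0.
by rewrite coev0 (tens0l hT) (cmp0l hC) !(cmp0r hC) => <-; rewrite eqxx.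
Qed.

Lemma evt_neq0 : evt D V != 0.
Proof.
apply/eqP => evt0; move: (zz_r1 hD V) abs_simple_idm_neq0.
by rewrite evt0 (tens0l hT) (cmp0l hC) !(cmp0r hC) => <-; rewrite eqxx.
Qed.

End PivotalDuality.

Theorem lemma3p1 (K : fieldType) (C : catData K) (T : tensData C) (D : dualData T)
  (hC : kcat_axioms C) (hA : additive_cat C) (hT : tens_axioms T)
  (hD : pivotal_axioms D)
  (h_absind : forall X : C, indecomposable X -> abs_indecomposable X)
  (h_nil : forall X : C, indecomposable X ->
     forall f : Mor X X, in_rad f -> nilpotent_endo f)
  (V : C) (hV : abs_simple V)
  (I : finType) (W : I -> C)
  (i : forall k : I, Mor (W k) (tens T V (dobj D V)))
  (p : forall k : I, Mor (tens T V (dobj D V)) (W k))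
  (hW : forall k : I, indecomposable (W k))
  (hpi : forall k : I, p k ∘ i k = idm (W k))
  (horth : forall k l : I, k != l -> (i k ∘ p k) ∘ (i l ∘ p l) = 0)
  (hsum : \sum_(k : I) (i k ∘ p k) = idm (tens T V (dobj D V))) :
  ((forall j : I,
      (i j ∘ p j) ∘ coev D V = coev D V <->
      ((exists f : Mor (tunit T) (W j), f <> 0) /\
       forall f : Mor (tunit T) (W j), exists c : K, f = c *: (p j ∘ coev D V)))
   /\ exists! j : I, (i j ∘ p j) ∘ coev D V = coev D V)
  /\
  ((forall j : I,
      evt D V ∘ (i j ∘ p j) = evt D V <->
      ((exists f : Mor (W j) (tunit T), f <> 0) /\
       forall f : Mor (W j) (tunit T), exists c : K, f = c *: (evt D V ∘ i j)))
   /\ exists! j : I, evt D V ∘ (i j ∘ p j) = evt D V).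
Proof.
have coev0 := coev_neq0 hC hT hD hV.
have evt0 := evt_neq0 hC hT hD hV.
have coev_case := summand_fix_iff_span hC coev0 (coev_span hC hT hD hV) hpi.
have coev_unique :=
  exists_unique_summand_fix hC coev0 (coev_span hC hT hD hV) hpi horth hsum.
(* In the opposite category [p k] and [i k] exchange roles while
   [i k ∘ p k] is unchanged. *)
have horth_op k l : k != l -> (i l ∘ p l) ∘ (i k ∘ p k) = 0.
  by rewrite eq_sym => /horth.
have evt_case :=
  summand_fix_iff_span (op_kcat_axioms hC) evt0 (evt_span hC hT hD hV) (p := i) hpi.
have evt_unique := exists_unique_summand_fix (op_kcat_axioms hC) evt0
  (evt_span hC hT hD hV) (p := i) hpi horth_op hsum.
by split; split.
Qed.
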